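(* Let $(q_{i,j})_{i,j\in\mathbb Z^{\geq 0}}$ be the array defined greedily by $q_{i,j}=\operatorname{mex}(\{q_{i,k}+q_{l,j}-q_{l,k}\mid 0\leq l<i,\ 0\leq k<j\}\cap\mathbb Z^{\geq 0})$, so that $q_{0,j}=0$ and $q_{1,j}=j$. Put $q_j=q_{2,j}$, and for $j\in\mathbb Z^{\geq 0}$ let $S_j=\{q_{2,k}+q_{l,j}-q_{l,k}\mid 0\le l<2,\ 0\le k<j\}\cap\mathbb Z^{\ge 0}$ (so $q_j=\operatorname{mex}(S_j)$), $U_j=\{q_k\mid 0\leq k<j\}$ and $W_j=\{q_k+j-k\mid 0\leq k<j\}$. For $j\in\mathbb N$ let $n(j)=\max\{k\mid\{0,1,\dots,k\}\subseteq U_j\}$, write $U_j=\{0,1,\dots,n(j),z_{j,1},\dots,z_{j,j-n(j)-1}\}$ with $n(j)+2\le z_{j,1}<\dots<z_{j,j-n(j)-1}$, and let $m(j)=\lfloor\varphi j\rfloor-j+1$. Then for every $j\in\mathbb Z^{\geq 0}$: (i) if $j\geq1$, $W_j=\{m(j),m(j)+1,\dots,\lfloor\varphi j\rfloor\}$; (ii) if $j\geq1$, $z_{j,i}=b(k_j+i-1)$ for all $i\in\{1,\dots,j-n(j)-1\}$, where $k_j$ is the least natural number with $b(k_j)>n(j)$; (iii) if $j\geq1$ and $j\in T_1$, then $n(j)=m(j)-2$; (iv) if $j\geq1$ and $j\in T_2$, then $n(j)=m(j)-1$; (v) if $j\ge1$ and $j\in T_3$, then $n(j)=m(j)$; (vi)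 $S_j=\emptyset$ if $j=0$; $S_j=\{0,1,\dots,\lfloor\varphi j\rfloor\}$ if $j\in A$; $S_j=\{0,1,\dots,\lfloor\varphi j\rfloor\}\setminus\{\lfloor(\varphi-1)j\rfloor\}$ if $j\in B$; (vii) $q_j=0$ if $j=0$; $q_j=\lfloor\varphi j\rfloor+1$ if $j\in A$; $q_j=\lfloor(\varphi-1)j\rfloor$ if $j\in B$.
   Context: $\mathbb N=\{1,2,\dots\}$, $\mathbb Z^{\ge0}=\{0,1,2,\dots\}$, $\varphi=\frac{1+\sqrt5}{2}$, $a(n)=\lfloor n\varphi\rfloor$, $b(n)=\lfloor n\varphi^2\rfloor$, $A=\{a(n)\mid n\in\mathbb N\}$, $B=\{b(n)\mid n\in\mathbb N\}$. $T_1=\{b(n)\mid n\in\mathbb N\}$, $T_2=\{b(n)-1\mid n\in\mathbb N\}$, $T_3=\{2a(n)+n\mid n\in\mathbb N\}$. For $X\subseteq\mathbb Z^{\ge0}$, $\operatorname{mex}(X)=\min(\mathbb Z^{\ge0}\setminus X)$. *)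

From Stdlib Require Import Reals.
From mathcomp Require Import all_boot.

Set Implicit Arguments.
Unset Strict Implicit.
Unset Printing Implicit Defensive.

Open Scope R_scope.
Definition phi : R := (1 + sqrt 5) / 2.

(* floor of a nonnegative real, as a nat ([Int_part] is the floor in Stdlib) *)
Definition nfloor (x : R) : nat := Z.to_nat (Int_part x).

Definition a (n : nat) : nat := nfloor (INR n * phi).
Definition b (n : nat) : nat := nfloor (INR n * (phi ^ 2)).
Definition floor_phi1 (j : nat) : nat := nfloor (INR j * (phi - 1)).
Close Scope R_scope.

Definition inA (j : nat) : Prop := exists n, 1 <= n /\ j = a n.
Definition inB (j : nat) : Prop := exists n, 1 <= n /\ j = b n.
Definition inT1 (j : nat) : Prop := exists n, 1 <= n /\ j = b n.
Definition inT2 (j : nat) : Prop := exists n, 1 <= n /\ j = b n - 1.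
Definition inT3 (j : nat) : Prop := exists n, 1 <= n /\ j = 2 * a n + n.

(* mex of a finite list of naturals: least n not in s (it is <= size s). *)
Definition mex (s : seq nat) : nat :=
  find (fun n => n \notin s) (iota 0 (size s).+1).

(* The candidate set {q_{i,k} + q_{l,j} - q_{l,k} | l < i, k < j} ∩ Z_{>=0},
   for an array Q; the integer difference is kept only when nonnegative. *)
Definition cand (Q : nat -> nat -> nat) (i j : nat) : seq nat :=
  [seq Q i p.2 + Q p.1 j - Q p.1 p.2 |
     p <- [seq (l, k) | l <- iota 0 i, k <- iota 0 j]
     & Q p.1 p.2 <= Q i p.2 + Q p.1 j].

(* Construction: [prev] = list of the rows 0..i-1, [pre] = q_{i,0..j-1}. *)
Definition next_entry (prev : seq (nat -> nat)) (pre : seq nat) : nat :=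
  let i := size prev in
  let j := size pre in
  let Q := fun l k => if l == i then nth 0 pre k
                      else nth (fun _ => 0) prev l k in
  mex (cand Q i j).

Fixpoint row_pref (prev : seq (nat -> nat)) (j : nat) : seq nat :=
  if j is j'.+1 then
    let pre := row_pref prev j' in rcons pre (next_entry prev pre)
  else [::].

Definition row (prev : seq (nat -> nat)) (j : nat) : nat :=
  nth 0 (row_pref prev j.+1) j.

Fixpoint rows (i : nat) : seq (nat -> nat) :=
  if i is i'.+1 then rcons (rows i') (row (rows i')) else [::].

Definition q (i j : nat) : nat := row (rows i) j.

Definition inS (j x : nat) : Prop :=
  exists l k, l < 2 /\ k < j /\ q l k <= q 2 k + q l j /\
              x = q 2 k + q l j - q l k.

Definition Useq (j : nat) : seq nat := [seq q 2 k | k <- iota 0 j].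
Definition inW (j x : nat) : Prop := exists k, k < j /\ x = q 2 k + j - k.

(* n(j) = max {k | {0,...,k} ⊆ U_j}  (meaningful for j >= 1) *)
Definition nU (j : nat) : nat :=
  \max_(k < j.+1 | all (fun x => x \in Useq j) (iota 0 k.+1)) k.

Definition zseq (j : nat) : seq nat :=
  sort leq (undup [seq x <- Useq j | nU j < x]).
Definition z (j i : nat) : nat := nth 0 (zseq j) i.-1.

Definition m (j : nat) : nat := a j - j + 1.

From Stdlib Require Import Reals ZArith Lra Lia Psatz.
From mathcomp Require Import all_boot zify.

(* Since q_{0,k} = 0 and q_{1,k} = k, S_j is the union of U_j and W_j.  By strong
   induction on j, q_{2,j} = wythoff j, the map fixing 0 and exchanging a n and b n:
   every y < wythoff j lies in U_j or W_j, while wythoff j lies in neither, because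
   both wythoff and k |-> wythoff k - k are injective.  Once q_{2,.} is known, U_j and
   W_j are explicit sets of Beatty numbers and every claim reduces to inequalities
   between a, b = a + id and their compositions, all consequences of phi^2 = phi + 1
   and of the irrationality of phi.  In particular N = 2 j - a j is the least n with
   j <= b n, and a N is the least element missing from U_j, whence n(j) = a N - 1. *)

Set Implicit Arguments.
Unset Strict Implicit.
Unset Printing Implicit Defensive.

(** * The golden ratio and its Beatty sequences *)

Lemma five_sq_neq_sq (n k : nat) : 0 < n -> 5 * (n * n) <> k * k.
Proof.
move=> n_gt0 eq5; have k_gt0 : 0 < k by case: k eq5 => [|k]; rewrite ?muln0; lia.
have := congr1 (logn 5) eq5.
rewrite !lognM ?muln_gt0 ?n_gt0 // (_ : logn 5 5 = 1) //; lia.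
Qed.

Local Open Scope R_scope.

Lemma nfloor_spec (r : R) (x : nat) : INR x <= r < INR x + 1 -> nfloor r = x.
Proof.
move=> [r_ge r_lt]; rewrite /nfloor /Int_part.
have -> : up r = (Z.of_nat x + 1)%Z.
  by symmetry; apply: tech_up; rewrite plus_IZR -INR_IZR_INZ /=; lra.
by rewrite Z.add_simpl_r Nat2Z.id.
Qed.

Lemma nfloor_bounds (r : R) : 0 <= r -> INR (nfloor r) <= r < INR (nfloor r) + 1.
Proof.
move=> r_ge0; have [ip_le ip_gt] := base_Int_part r.
have ip_ge0 : (0 <= Int_part r)%Z.
  suff : (-1 < Int_part r)%Z by lia.
  by apply: lt_IZR; rewrite /=; lra.
rewrite /nfloor INR_IZR_INZ Z2Nat.id //; lra.
Qed.

Lemma nfloor_lt (r : R) (x : nat) : 0 <= r -> (nfloor r < x)%N <-> r < INR x.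
Proof.
move=> r_ge0; have [fl_le fl_gt] := nfloor_bounds r_ge0; split.
- by move=> /leP /le_INR; rewrite S_INR; lra.
- by move=> r_lt; apply/leP; apply: INR_lt; lra.
Qed.

Lemma nfloor_le (r : R) (x : nat) : 0 <= r -> (x <= nfloor r)%N <-> INR x <= r.
Proof.
move=> r_ge0; rewrite leqNgt; split.
- by move=> /negP lt_x; apply: Rnot_lt_le => /(nfloor_lt x r_ge0).
- by move=> le_x; apply/negP => /(nfloor_lt x r_ge0); lra.
Qed.

Lemma INR_leq m n : (m <= n)%N -> INR m <= INR n.
Proof. by move/leP; apply: le_INR. Qed.

Lemma ltn_INR m n : INR m < INR n -> (m < n)%N.
Proof. by move/INR_lt/ltP. Qed.

Lemma INR_ge1 n : (0 < n)%N -> 1 <= INR n.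
Proof. exact: (@INR_leq 1). Qed.

Lemma INR_subn m n : (n <= m)%N -> INR (m - n) = INR m - INR n.
Proof. by move/leP; apply: minus_INR. Qed.

Lemma INR_double n : INR (2 * n) = 2 * INR n.
Proof. by rewrite mult_INR. Qed.

Lemma phi_sq : phi * phi = phi + 1.
Proof. by rewrite /phi; have := sqrt_sqrt 5; nra. Qed.

Lemma phi_gt : 1.618 < phi.
Proof. by rewrite /phi; have := sqrt_sqrt 5; have := sqrt_pos 5; nra. Qed.

Lemma phi_lt : phi < 1.6181.
Proof. by rewrite /phi; have := sqrt_sqrt 5; have := sqrt_pos 5; nra. Qed.

Lemma phi_cube : phi * phi * phi = 2 * phi + 1.
Proof. by rewrite phi_sq; have := phi_sq; nra. Qed.

Ltac phi_facts := have := phi_sq; have := phi_gt; have := phi_lt; have := phi_cube.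

Lemma phi_irrational n x : (0 < n)%N -> INR n * phi <> INR x.
Proof.
move=> n_gt0 nphiE; have n_ge1 := INR_ge1 n_gt0.
have s5 : sqrt 5 * sqrt 5 = 5 by apply: sqrt_sqrt; lra.
have s5_ge0 := sqrt_pos 5.
have n_sqrt5 : INR n * sqrt 5 = 2 * INR x - INR n by move: nphiE; rewrite /phi; lra.
have n_le : (n <= 2 * x)%N by apply/leP/INR_le; rewrite mult_INR /=; nra.
apply: (@five_sq_neq_sq n (2 * x - n) n_gt0); apply: INR_eq.
rewrite !mult_INR INR_subn // mult_INR /=.
have : (INR n * sqrt 5) * (INR n * sqrt 5) = 5 * INR n * INR n by nra.
by rewrite n_sqrt5; lra.
Qed.

Lemma nphi_ge0 n : 0 <= INR n * phi.
Proof. by have := pos_INR n; phi_facts; nra. Qed.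

Lemma nphi_sq n : INR n * phi * phi = INR n * phi + INR n.
Proof. by rewrite Rmult_assoc phi_sq; ring. Qed.

Lemma a_bounds n : INR (a n) <= INR n * phi < INR (a n) + 1.
Proof. exact/nfloor_bounds/nphi_ge0. Qed.

Lemma a_lt_nphi n : (0 < n)%N -> INR (a n) < INR n * phi.
Proof.
move=> n_gt0; have [[//|aE] _] := a_bounds n.
by have := @phi_irrational n (a n) n_gt0; rewrite aE.
Qed.

Lemma a_spec n x : INR x <= INR n * phi < INR x + 1 -> a n = x.
Proof. exact: nfloor_spec. Qed.

Lemma a_lt n x : (a n < x)%N <-> INR n * phi < INR x.
Proof. exact/nfloor_lt/nphi_ge0. Qed.

Lemma a_le n x : (x <= a n)%N <-> INR x <= INR n * phi.
Proof. exact/nfloor_le/nphi_ge0. Qed.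

Lemma a_ge n : (n <= a n)%N.
Proof. by apply/a_le; have := pos_INR n; phi_facts; nra. Qed.

Lemma bE n : b n = (a n + n)%N.
Proof.
have := a_bounds n; rewrite /b => a_bnd.
by apply: nfloor_spec; rewrite plus_INR /= Rmult_1_r -Rmult_assoc nphi_sq; lra.
Qed.

Lemma b_lt n x : (b n < x)%N <-> INR n * phi * phi < INR x.
Proof.
rewrite bE nphi_sq; have := a_bounds n; split => [lt_x|lt_x].
- by have := INR_leq lt_x; rewrite S_INR plus_INR; lra.
- by apply: ltn_INR; rewrite plus_INR; lra.
Qed.

Lemma floor_phi1E j : floor_phi1 j = (a j - j)%N.
Proof.
have := a_bounds j; rewrite /floor_phi1 => a_bnd.
by apply: nfloor_spec; rewrite INR_subn ?a_ge //; lra.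
Qed.

Lemma a_a n : (0 < n)%N -> a (a n) = (a n + n - 1)%N.
Proof.
move=> n_gt0; apply: a_spec.
have := a_lt_nphi n_gt0; have := a_bounds n; have := nphi_sq n; have := INR_ge1 n_gt0.
by rewrite INR_subn ?plus_INR /=; [phi_facts; nra | lia].
Qed.

Lemma a_b n : a (b n) = (a n + b n)%N.
Proof.
rewrite bE; apply: a_spec.
have := a_bounds n; have := nphi_sq n; have := pos_INR n.
by rewrite !plus_INR; phi_facts; nra.
Qed.

Lemma a_a_add1 n : a (a n + 1) = (a n + n + 1)%N.
Proof.
apply: a_spec; have := a_bounds n; have := nphi_sq n; have := pos_INR n.
by rewrite !plus_INR /=; phi_facts; nra.
Qed.

Lemma a_b_sub1 n : (0 < n)%N -> a (b n - 1) = (a n + b n - 2)%N.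
Proof.
move=> n_gt0; rewrite bE; have := a_ge n => n_le; apply: a_spec.
have := a_lt_nphi n_gt0; have := a_bounds n; have := nphi_sq n; have := INR_ge1 n_gt0.
by rewrite !INR_subn ?plus_INR /=; try lia; phi_facts; nra.
Qed.

Lemma a_neq_b n m : (0 < n)%N -> (0 < m)%N -> a n <> b m.
Proof.
move=> n_gt0 m_gt0 abE; rewrite bE in abE.
have := a_lt_nphi n_gt0; have := a_bounds n; have := a_lt_nphi m_gt0; have := a_bounds m.
have := nphi_sq n; have := nphi_sq m.
rewrite abE plus_INR; set X := INR (a m) => *.
have lo : INR n + INR m > X + INR m.
  have : (INR n * phi - X - INR m) * (phi - 1) > 0 by phi_facts; nra.
  by phi_facts; nra.
have hi : INR n + INR m < X + INR m + 1.
  have : (X + INR m + 1 - INR n * phi) * (phi - 1) > 0 by phi_facts; nra.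
  by phi_facts; nra.
have : (a m + m < n + m)%N by apply: ltn_INR; rewrite !plus_INR.
have : (n + m < a m + m + 1)%N by apply: ltn_INR; rewrite !plus_INR.
lia.
Qed.

Lemma a_b_cover x : (0 < x)%N ->
  (exists n, (0 < n)%N /\ a n = x) \/ (exists n, (0 < n)%N /\ b n = x).
Proof.
(* n = a (x + 1) - (x + 1) counts the a-values up to x, so x is a n or b (x - n). *)
move=> x_gt0; have x_ge1 := INR_ge1 x_gt0.
have a_x1 := a_ge (x + 1); set n := (a (x + 1) - (x + 1))%N.
have a_bnd := a_bounds (x + 1); have a_lt := @a_lt_nphi (x + 1) (ltn_addl x (ltn0Sn 0)).
have nE : INR n = INR (a (x + 1)) - INR x - 1 by rewrite /n INR_subn // plus_INR /=; lra.
have x1_sq := nphi_sq (x + 1); rewrite plus_INR /= in a_bnd a_lt x1_sq.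
have n_sq := nphi_sq n.
have nphi_lt : INR n * phi < INR x + 1.
  have : ((INR x + 1) * (phi - 1) - INR n) * phi > 0 by phi_facts; nra.
  by phi_facts; nra.
case: (Rlt_or_le (INR x) (INR n * phi)) => [x_lt|x_ge].
- left; exists n; split; last by apply: a_spec; lra.
  by case: (posnP n) x_lt => // ->; rewrite /=; lra.
- have n_lt : (n < x)%N by apply: ltn_INR; have := pos_INR n; phi_facts; nra.
  right; exists (x - n)%N; split; first by lia.
  rewrite bE (_ : a (x - n) = n); first by lia.
  by apply: a_spec; rewrite INR_subn; [phi_facts; nra | lia].
Qed.

Lemma a_increasing : {homo a : n m / (n < m)%N}.
Proof.
move=> n m lt_nm; apply/a_lt; have := a_bounds m; have := a_bounds n.
by have := INR_leq lt_nm; rewrite S_INR; phi_facts; nra.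
Qed.

Lemma a_lt_double j : (0 < j)%N -> (a j < 2 * j)%N.
Proof. by move=> j_gt0; apply/a_lt; rewrite INR_double; have := INR_ge1 j_gt0; phi_facts; nra. Qed.

Lemma a_lt_iff n j : (0 < n)%N -> (a n < j)%N <-> (n + j <= a j)%N.
Proof.
move=> n_gt0; rewrite a_lt a_le plus_INR.
have := a_bounds j; have := nphi_sq n; have := nphi_sq j; have := INR_ge1 n_gt0.
have := pos_INR j; split => [lt_j|le_j].
- have : (INR j - INR n * phi) * (phi - 1) > 0 by phi_facts; nra.
  by phi_facts; nra.
- have lt_j : INR n + INR j < INR j * phi.
    case: le_j => // nj_eq; case: (posnP j) => [j0|j_gt0].
      by move: nj_eq; rewrite j0 /=; nra.
    by have := @phi_irrational j (n + j) j_gt0; rewrite plus_INR nj_eq.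
  have : (INR j * phi - INR n - INR j) * phi > 0 by phi_facts; nra.
  by phi_facts; nra.
Qed.

Lemma b_lt_iff n j : (0 < n)%N -> (b n < j)%N <-> (n + a j < 2 * j)%N.
Proof.
move=> n_gt0; rewrite b_lt.
have := a_bounds j; have := nphi_sq n; have := nphi_sq j; have := INR_ge1 n_gt0.
have := pos_INR j; split => [lt_j|lt_2j].
- apply: ltn_INR; rewrite plus_INR INR_double.
  have : (INR j - INR n * phi * phi) * (2 - phi) > 0 by phi_facts; nra.
  by phi_facts; nra.
- have := INR_leq lt_2j; rewrite S_INR plus_INR INR_double => *.
  have : (2 * INR j - INR j * phi - INR n) * (phi * phi) > 0 by phi_facts; nra.
  by phi_facts; nra.
Qed.

Lemma b_lt_of_a_add_lt p j : (0 < p)%N -> (a p + j < a j)%N -> (b p < j)%N.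
Proof.
move=> p_gt0 lt_aj; apply/b_lt_iff => //.
have := INR_leq lt_aj; rewrite S_INR !plus_INR => *.
have := a_bounds p; have := a_bounds j; have := nphi_sq p; have := nphi_sq j.
have := pos_INR p; have := pos_INR j => *.
apply: ltn_INR; rewrite plus_INR INR_double.
have : (INR j * phi - INR j - INR p * phi) * (phi - 1) > 0 by phi_facts; nra.
by phi_facts; nra.
Qed.

Lemma b_le_a_of_a_lt p r : (a p < r)%N -> (b p <= a r)%N.
Proof.
move/a_lt => lt_r; apply/a_le; rewrite bE plus_INR.
by have := a_bounds p; have := nphi_sq p; have := nphi_sq r; phi_facts; nra.
Qed.

Lemma a0 : a 0 = 0%N.
Proof. by apply: a_spec; rewrite /=; lra. Qed.

Lemma a1 : a 1 = 1%N.
Proof. by apply: a_spec; rewrite /=; phi_facts; lra. Qed.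

Lemma a_double_sub_le j : (0 < j)%N -> (a (2 * j - a j) <= j)%N.
Proof.
move=> j_gt0; have aj_lt := a_lt_double j_gt0.
case: (ltngtP j 1) => [j_lt1|j_gt1|->]; [lia | | by rewrite a1 (_ : (2 * 1 - 1 = 1)%N) // a1].
rewrite -ltnS; apply/a_lt; rewrite INR_subn ?INR_double ?S_INR; last by lia.
have := a_lt_nphi j_gt0; have := a_bounds j; have := nphi_sq j; have := INR_leq j_gt1 => /= *.
have : (INR (a j) - (INR j * phi - 1)) * phi > 0 by phi_facts; nra.
by phi_facts; nra.
Qed.

Lemma a_lt_b_succ n : (0 < n)%N -> (a n < b (a n - n + 1))%N.
Proof.
move=> n_gt0; have an_ge := a_ge n.
have le_b : (a n <= b (a n - n + 1))%N.
  rewrite leqNgt; apply/negP => /b_lt.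
  rewrite plus_INR INR_subn // /=.
  have := a_bounds n; have := nphi_sq n; have := pos_INR n => *.
  have : (INR (a n) - INR n + 1 - INR n * (phi - 1)) * (phi * phi) > 0 by phi_facts; nra.
  by phi_facts; nra.
rewrite ltn_neqAle le_b andbT; apply/eqP.
by apply: a_neq_b; lia.
Qed.

Lemma b_lt_a n : (0 < n)%N -> (b (a n - n) < a n)%N.
Proof.
move=> n_gt0; have an_ge := a_ge n.
case: (posnP (a n - n)) => [->|an_gt]; first by rewrite bE a0; lia.
have le_a : (b (a n - n) <= a n)%N.
  apply/a_le; rewrite bE plus_INR INR_subn //.
  have := a_bounds (a n - n); rewrite INR_subn // => *.
  have := a_lt_nphi n_gt0; have := a_bounds n; have := nphi_sq n; have := pos_INR n => *.
  have : (INR n * phi - INR n - (INR (a n) - INR n)) * (phi * phi) > 0 by phi_facts; nra.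
  by phi_facts; nra.
rewrite ltn_neqAle le_a andbT; apply/eqP => abE.
exact: (a_neq_b n_gt0 an_gt (esym abE)).
Qed.

Local Close Scope R_scope.

Lemma leq_a : {mono a : n m / n <= m}.
Proof. exact/leq_mono/a_increasing. Qed.

Lemma ltn_a : {mono a : n m / n < m}.
Proof. by move=> n m; rewrite !ltnNge leq_a. Qed.

Lemma a_inj : injective a.
Proof. exact/incn_inj/leq_a. Qed.

Lemma leq_b : {mono b : n m / n <= m}.
Proof. by move=> n m; rewrite !bE; have := leq_a n m; lia. Qed.

Lemma ltn_b : {mono b : n m / n < m}.
Proof. by move=> n m; rewrite !ltnNge leq_b. Qed.

Variant beatty_spec : nat -> Prop :=
  | BeattyZero : beatty_spec 0
  | BeattyA p of 0 < p : beatty_spec (a p)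
  | BeattyB p of 0 < p : beatty_spec (b p).

Lemma beattyP x : beatty_spec x.
Proof.
case: (posnP x) => [->|x_gt0]; first exact: BeattyZero.
by case: (a_b_cover x_gt0) => -[p [p_gt0 <-]]; constructor.
Qed.

(** * The greedy array *)

Lemma size_row_pref prev j : size (row_pref prev j) = j.
Proof. by elim: j => //= j IHj; rewrite size_rcons IHj. Qed.

Lemma row_next prev j : row prev j = next_entry prev (row_pref prev j).
Proof. by rewrite /row /= nth_rcons size_row_pref ltnn eqxx. Qed.

Lemma row_prefE prev j : row_pref prev j = mkseq (row prev) j.
Proof.
elim: j => // j IHj; rewrite [LHS]/= -row_next IHj /mkseq -addn1 iotaD map_cat.
by rewrite add0n cats1.
Qed.

Lemma size_rows i : size (rows i) = i.
Proof. by elim: i => //= i IHi; rewrite size_rcons IHi. Qed.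

Lemma nth_rows i l : l < i -> nth (fun _ => 0) (rows i) l = q l.
Proof.
elim: i => // i IHi; rewrite ltnS leq_eqVlt => /orP [/eqP ->|lt_li] /=.
  by rewrite nth_rcons size_rows ltnn eqxx.
by rewrite nth_rcons size_rows lt_li IHi.
Qed.

Lemma mex_spec s x : (forall y, y < x -> y \in s) -> x \notin s -> mex s = x.
Proof.
move=> lt_x_in x_notin.
have x_le : x <= size s.
  rewrite -(size_iota 0 x) uniq_leq_size ?iota_uniq // => y.
  by rewrite mem_iota => /lt_x_in.
have has_notin : has (fun n => n \notin s) (iota 0 (size s).+1).
  by apply/hasP; exists x; rewrite ?mem_iota.
rewrite /mex; set i := find _ _.
have i_lt : i < (size s).+1 by rewrite -[X in _ < X](size_iota 0) -has_find.
case: (ltngtP i x) => // [i_lt_x|x_lt_i].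
- by have := nth_find 0 has_notin; rewrite -/i nth_iota // add0n lt_x_in.
- by have := before_find 0 x_lt_i; rewrite nth_iota ?add0n ?x_notin //; lia.
Qed.

Definition inCand i j y := exists l k, l < i /\ k < j /\
  q l k <= q i k + q l j /\ y = q i k + q l j - q l k.

Lemma mem_cand Q i j y : (forall l, l < i -> Q l = q l) ->
  (forall k, k < j -> Q i k = q i k) -> (y \in cand Q i j <-> inCand i j y).
Proof.
move=> Q_lt Q_i; rewrite /cand; split.
- case/mapP => -[l k]; rewrite mem_filter /= => /andP [le_Q].
  case/allpairsP => -[l' k'] [/=]; rewrite !mem_iota !add0n.
  move=> /andP [_ lt_l] /andP [_ lt_k] [lE kE] ->; subst l' k'.
  by rewrite (Q_lt l) // (Q_i k) // in le_Q *; exists l, k.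
- move=> [l [k [lt_l [lt_k [le_q ->]]]]].
  apply/mapP; exists (l, k); last by rewrite /= (Q_lt l) // (Q_i k).
  rewrite mem_filter /= (Q_lt l) // (Q_i k) // le_q /=.
  by apply/allpairsP; exists (l, k); rewrite /= !mem_iota !add0n.
Qed.

Lemma q_spec i j x : (forall y, y < x -> inCand i j y) -> ~ inCand i j x -> q i j = x.
Proof.
move=> lt_x_in x_notin; rewrite /q row_next /next_entry size_rows size_row_pref /=.
set Q := (X in cand X); have memE y : y \in cand Q i j <-> inCand i j y.
  apply: mem_cand => [l lt_l|k lt_k]; first by rewrite /Q ltn_eqF // nth_rows.
  by rewrite /Q eqxx row_prefE nth_mkseq.
by apply: mex_spec => [y /lt_x_in /memE|]; last apply/negP => /memE.
Qed.

Lemma q0 j : q 0 j = 0.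
Proof. by apply: q_spec => // -[l [k []]]. Qed.

Lemma q1 j : q 1 j = j.
Proof.
elim/ltn_ind: j => j IHj; apply: q_spec.
- by move=> y lt_y; exists 0, y; rewrite !q0 IHj // !addn0 subn0.
- move=> [l [k [lt_l [lt_k [_]]]]].
  move: lt_l; rewrite ltnS leqn0 => /eqP ->; rewrite !q0 IHj // addn0 subn0 => jE.
  by rewrite jE ltnn in lt_k.
Qed.

Lemma inS_iff j x : inS j x <->
  (exists2 k, k < j & x = q 2 k) \/ (exists2 k, k < j & x = q 2 k + j - k).
Proof.
split.
- move=> [l [k [lt_l [lt_k [_ ->]]]]].
  move: lt_l; rewrite ltnS leq_eqVlt ltnS leqn0 => /orP [] /eqP ->.
  + by right; exists k; rewrite ?q1.
  + by left; exists k; rewrite ?q0 ?addn0 ?subn0.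
- case=> -[k lt_k ->].
  + by exists 0, k; rewrite !q0 addn0 subn0.
  + by exists 1, k; rewrite !q1; do !split => //; lia.
Qed.

(** * The second row *)

Definition inAb j := has (fun n => a n == j) (iota 1 j).

Lemma inAP j : reflect (inA j) (inAb j).
Proof.
apply: (iffP hasP) => [[n]|[n [n_gt0 ->]]].
- by rewrite mem_iota => /andP [n_gt0 _] /eqP <-; exists n.
- by exists n => //; rewrite mem_iota n_gt0 /= add1n ltnS a_ge.
Qed.

Lemma notA_b p : 0 < p -> ~ inA (b p).
Proof. by move=> p_gt0 [n [n_gt0 /esym]]; apply: a_neq_b. Qed.

(* Since a (a p) + 1 = b p and a (b p) - b p = a p, this exchanges a p and b p. *)
Definition wythoff j := if inAb j then a j + 1 else a j - j.

Lemma wythoff0 : wythoff 0 = 0.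
Proof. by rewrite /wythoff /= a0. Qed.

Lemma wythoff_a p : 0 < p -> wythoff (a p) = b p.
Proof.
move=> p_gt0; rewrite /wythoff; case: inAP => [_|[]]; last by exists p.
by rewrite a_a // bE; have := a_ge p; lia.
Qed.

Lemma wythoff_b p : 0 < p -> wythoff (b p) = a p.
Proof.
move=> p_gt0; rewrite /wythoff; case: inAP => [/(notA_b p_gt0) //|_].
by rewrite a_b; lia.
Qed.

Lemma wythoffK : involutive wythoff.
Proof.
case=> [|x]; first by rewrite !wythoff0.
case: (beattyP x.+1) => [|p p_gt0|p p_gt0]; first by rewrite !wythoff0.
- by rewrite wythoff_a // wythoff_b.
- by rewrite wythoff_b // wythoff_a.
Qed.

Lemma wythoff_shift_inj x y : wythoff x + y = wythoff y + x -> x = y.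
Proof.
case: (beattyP x) => [|p p_gt0|p p_gt0]; case: (beattyP y) => [|r r_gt0|r r_gt0];
  rewrite ?wythoff0 ?wythoff_a ?wythoff_b // => eq_xy; rewrite ?bE ?a0 in eq_xy.
all: first [lia | by congr a; lia | by congr b; lia].
Qed.

Definition inUw j y := exists2 k, k < j & y = wythoff k.
Definition inWw j y := exists2 k, k < j & y = wythoff k + j - k.

Lemma inWw_iff j y : 0 < j -> inWw j y <-> a j - j + 1 <= y <= a j.
Proof.
move=> j_gt0; have aj_lt := a_lt_double j_gt0; have aj_ge := a_ge j; split.
- case=> k lt_kj ->; case: (beattyP k) lt_kj => [|p p_gt0|p p_gt0] lt_pj.
  + by rewrite wythoff0; lia.
  + by rewrite wythoff_a // bE; have := (a_lt_iff j p_gt0).1 lt_pj; lia.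
  + by rewrite wythoff_b // bE; have := (b_lt_iff j p_gt0).1 lt_pj; lia.
- case/andP => y_ge y_le; case: (ltngtP y j) => [lt_yj|lt_jy|->].
  + have p_gt0 : 0 < j - y by lia.
    exists (b (j - y)); first by apply/b_lt_iff => //; lia.
    by rewrite wythoff_b // bE; lia.
  + have p_gt0 : 0 < y - j by lia.
    exists (a (y - j)); first by apply/a_lt_iff => //; lia.
    by rewrite wythoff_a // bE; lia.
  + by exists 0; rewrite // wythoff0; lia.
Qed.

Lemma inUw_lt j y : 0 < j -> y < a j - j -> inUw j y.
Proof.
move=> j_gt0; have aj_ge := a_ge j.
case: (beattyP y) => [|p p_gt0|p p_gt0] lt_y; first by exists 0; rewrite ?wythoff0.
- exists (b p); last by rewrite wythoff_b.
  by apply: b_lt_of_a_add_lt => //; lia.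
- exists (a p); last by rewrite wythoff_a.
  by apply/a_lt_iff => //; move: lt_y; rewrite bE; lia.
Qed.

Lemma inUw_A j : inA j -> inUw j (a j - j).
Proof.
case=> r [r_gt0 ->]; have ar_ge := a_ge r; rewrite a_a // (_ : a r + r - 1 - a r = r - 1); last by lia.
case rE : (r - 1) / (beattyP (r - 1)) => [|p p_gt0|p p_gt0].
- by exists 0; rewrite ?wythoff0 //; lia.
- exists (b p); last by rewrite wythoff_b.
  have le_b : b p <= a r by apply: b_le_a_of_a_lt; lia.
  by rewrite ltn_neqAle le_b andbT; apply/eqP => /esym; apply: a_neq_b.
- exists (a p); last by rewrite wythoff_a.
  by rewrite ltn_a; rewrite bE in rE; lia.
Qed.

Lemma inUw_le j y : inUw j y -> y <= a j.
Proof.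
case=> k lt_kj ->; case: (beattyP k) lt_kj => [|p p_gt0|p p_gt0] lt_pj.
- by rewrite wythoff0.
- by rewrite wythoff_a // bE; have := a_a p_gt0; have := a_increasing lt_pj; lia.
- by rewrite wythoff_b //; rewrite bE in lt_pj; have := a_ge j; lia.
Qed.

Lemma lt_wythoff_UW j y : y < wythoff j -> inUw j y \/ inWw j y.
Proof.
case: (beattyP j) => [|r r_gt0|r r_gt0]; first by rewrite wythoff0.
- have ar_gt0 : 0 < a r by have := a_ge r; lia.
  rewrite wythoff_a // => lt_y.
  have brE : b r = a (a r) + 1 by rewrite a_a // bE; lia.
  case: (ltngtP y (a (a r) - a r)) => [lt_ya|gt_ya|->].
  + by left; apply: inUw_lt.
  + by right; apply/(inWw_iff y ar_gt0); lia.
  + by left; apply: inUw_A; exists r.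
- have br_gt0 : 0 < b r by rewrite bE; lia.
  rewrite wythoff_b // => lt_y; left; apply: inUw_lt => //.
  by rewrite a_b; lia.
Qed.

Lemma wythoff_notin_UW j : ~ (inUw j (wythoff j) \/ inWw j (wythoff j)).
Proof.
case=> -[k lt_kj wE].
- by rewrite (can_inj wythoffK wE) ltnn in lt_kj.
- have jE : j = k by apply: wythoff_shift_inj; lia.
  by rewrite jE ltnn in lt_kj.
Qed.

Lemma inS_UW_lt j y : (forall k, k < j -> q 2 k = wythoff k) ->
  inS j y <-> inUw j y \/ inWw j y.
Proof.
move=> q2_lt; rewrite inS_iff.
by split=> -[] [k lt_kj ->]; [left|right|left|right]; exists k; rewrite ?q2_lt.
Qed.

Lemma q2E j : q 2 j = wythoff j.
Proof.
elim/ltn_ind: j => j IHj; apply: q_spec => [y|].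
- by move/lt_wythoff_UW/(inS_UW_lt y IHj).
- by move/(inS_UW_lt _ IHj); apply: wythoff_notin_UW.
Qed.

Lemma inS_UW j y : inS j y <-> inUw j y \/ inWw j y.
Proof. exact: inS_UW_lt (fun k _ => q2E k). Qed.

Lemma mem_Useq j y : (y \in Useq j) <-> inUw j y.
Proof.
rewrite /Useq; split.
- by case/mapP => k; rewrite mem_iota add0n => lt_kj ->; exists k; rewrite ?q2E.
- by case=> k lt_kj ->; apply/mapP; exists k; rewrite ?mem_iota ?q2E.
Qed.

Lemma inUw_iff j y : 0 < j -> inUw j y <->
  [\/ y = 0, exists2 p, 0 < p & p + j <= a j /\ y = b p
          | exists2 p, 0 < p & p + a j < 2 * j /\ y = a p].
Proof.
move=> j_gt0; split.
- case=> k + ->; case: (beattyP k) => [|p p_gt0|p p_gt0] lt_kj.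
  + by apply: Or31; rewrite wythoff0.
  + by apply: Or32; exists p; rewrite ?wythoff_a // -a_lt_iff.
  + by apply: Or33; exists p; rewrite ?wythoff_b // -b_lt_iff.
- case=> [->|[p p_gt0 [lt_p ->]]|[p p_gt0 [lt_p ->]]]; first by exists 0; rewrite ?wythoff0.
  + by exists (a p); rewrite ?wythoff_a // a_lt_iff.
  + by exists (b p); rewrite ?wythoff_b // b_lt_iff.
Qed.

Lemma b_lt_a_double_sub j n : 0 < j -> 0 < n -> b n < a (2 * j - a j) -> n + j <= a j.
Proof.
move=> j_gt0 n_gt0 lt_bn; have := a_lt_double j_gt0; have := a_double_sub_le j_gt0.
move: lt_bn; set N := 2 * j - a j => lt_bn le_aN aj_lt.
have N_gt0 : 0 < N by rewrite /N; lia.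
have le_n : n <= a N - N.
  rewrite leqNgt; apply/negP => lt_n; have := a_lt_b_succ N_gt0.
  have : b (a N - N + 1) <= b n by rewrite leq_b addn1.
  lia.
by have := a_ge N; have NE : N = 2 * j - a j by []; lia.
Qed.

Lemma a_double_sub_notin_Uw j : 0 < j -> ~ inUw j (a (2 * j - a j)).
Proof.
move=> j_gt0; have aj_lt := a_lt_double j_gt0; move/(inUw_iff _ j_gt0).
set N := 2 * j - a j; have N_gt0 : 0 < N by rewrite /N; lia.
case=> [aN0|[p p_gt0 [_ /(a_neq_b N_gt0 p_gt0)]]|[p p_gt0 [lt_p /a_inj pE]]] //.
- by have := a_ge N; lia.
- by rewrite /N in pE; lia.
Qed.

Lemma iota_sub_Useq j k : 0 < j ->
  all (fun x => x \in Useq j) (iota 0 k.+1) = (k < a (2 * j - a j)).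
Proof.
move=> j_gt0; have aj_lt := a_lt_double j_gt0.
case: (ltnP k (a (2 * j - a j))) => [lt_k|le_k].
- apply/allP => y; rewrite mem_iota add0n ltnS => le_y.
  apply/mem_Useq/(inUw_iff _ j_gt0).
  case: (beattyP y) le_y => [|p p_gt0|p p_gt0] le_y; first exact: Or31.
  + apply: Or33; exists p => //; split => //.
    have : a p < a (2 * j - a j) by lia.
    by rewrite ltn_a; lia.
  + by apply: Or32; exists p => //; split => //; apply: b_lt_a_double_sub; lia.
- apply/negbTE/negP => /allP /(_ (a (2 * j - a j))).
  rewrite mem_iota add0n ltnS le_k => /(_ isT) /mem_Useq.
  exact: a_double_sub_notin_Uw.
Qed.

Lemma nUE j : 0 < j -> nU j = a (2 * j - a j) - 1.
Proof.
move=> j_gt0; have := a_double_sub_le j_gt0; have := a_lt_double j_gt0.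
set M := a (2 * j - a j) - 1 => aj_lt le_aN.
have aN_gt0 : 0 < a (2 * j - a j) by have := a_ge (2 * j - a j); lia.
have lt_M : M < j.+1 by rewrite /M; lia.
apply/eqP; rewrite eqn_leq; apply/andP; split.
- by apply/bigmax_leqP => i; rewrite iota_sub_Useq // => lt_i; rewrite /M; lia.
- by apply: (bigmax_sup (Ordinal lt_M)) => //; rewrite iota_sub_Useq //= /M; lia.
Qed.

Lemma zseqE j : 0 < j ->
  let N := 2 * j - a j in zseq j = map b (iota (a N - N + 1) ((a j - j) - (a N - N))).
Proof.
move=> j_gt0 N; have := a_double_sub_le j_gt0; have := a_lt_double j_gt0; have := a_ge j.
rewrite -/N => aj_ge aj_lt le_aN; have NE : N = 2 * j - a j by [].
have N_gt0 : 0 < N by lia.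
have := a_ge N; have := a_lt_b_succ N_gt0; have := b_lt_a N_gt0 => lt_b lt_a aN_ge.
apply: (irr_sorted_eq ltn_trans ltnn).
- rewrite ltn_sorted_uniq_leq sort_uniq undup_uniq.
  exact: sort_sorted leq_total _.
- by rewrite sorted_map; apply: sub_sorted (iota_ltn_sorted _ _) => x y /=; rewrite ltn_b.
move=> y; rewrite /zseq mem_sort mem_undup mem_filter nUE // -/N.
apply/idP/idP.
- case/andP => lt_y /mem_Useq /(inUw_iff _ j_gt0).
  case=> [yE|[p p_gt0 [le_p yE]]|[p p_gt0 [lt_p yE]]]; rewrite yE in lt_y *; first by lia.
  + apply/mapP; exists p => //; rewrite mem_iota.
    suff : a N - N < p by lia.
    by rewrite -ltn_b; lia.
  + have : p < N by lia.
    by rewrite -ltn_a; lia.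
- case/mapP => n; rewrite mem_iota => /andP [le_n lt_n] ->.
  apply/andP; split.
  + by have := leq_b (a N - N + 1) n; rewrite le_n; lia.
  + by apply/mem_Useq/(inUw_iff _ j_gt0); apply: Or32; exists n => //; lia.
Qed.

Lemma inW_iff j x : 0 < j -> inW j x <-> m j <= x <= a j.
Proof.
move=> j_gt0; rewrite -inWw_iff //.
by split=> [[k [lt_kj ->]]|[k lt_kj ->]]; [exists k | exists k; split]; rewrite ?q2E.
Qed.

Lemma size_zseq j : 0 < j -> size (zseq j) = j - nU j - 1.
Proof.
move=> j_gt0; rewrite zseqE // size_map size_iota nUE //.
have := a_double_sub_le j_gt0; have := a_lt_double j_gt0; have := a_ge j.
by have := a_ge (2 * j - a j); lia.
Qed.

Lemma least_b_gt_nU j k : 0 < j -> 0 < k -> nU j < b k ->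
    (forall k', 0 < k' -> k' < k -> b k' <= nU j) ->
  k = a (2 * j - a j) - (2 * j - a j) + 1.
Proof.
move=> j_gt0 k_gt0; rewrite nUE //; set N := 2 * j - a j => lt_bk min_k.
have N_gt0 : 0 < N by have := a_lt_double j_gt0; rewrite /N; lia.
have := a_lt_b_succ N_gt0; have := b_lt_a N_gt0 => lt_b lt_a.
apply/eqP; rewrite eqn_leq; apply/andP; split; rewrite leqNgt; apply/negP => lt_k.
- by have := min_k (a N - N + 1) (ltn_addl _ (ltnSn 0)) lt_k; lia.
- have le_k : k <= a N - N by lia.
  by rewrite -leq_b in le_k; lia.
Qed.

Lemma zE j i : 0 < j -> 0 < i <= j - nU j - 1 ->
  z j i = b (a (2 * j - a j) - (2 * j - a j) + i).
Proof.
move=> j_gt0 /andP [i_gt0 le_i]; move: le_i; rewrite -size_zseq // /z zseqE //.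
rewrite size_map size_iota => le_i.
by rewrite (nth_map 0) ?size_iota ?nth_iota; [congr b; lia | lia | lia].
Qed.

Lemma nU_T1 j : 0 < j -> inT1 j -> nU j + 2 = m j.
Proof.
move=> j_gt0 [p [p_gt0 jE]]; rewrite jE in j_gt0 *; rewrite nUE // /m a_b.
have := a_ge p; have := bE p => bpE ap_ge.
by rewrite (_ : 2 * b p - (a p + b p) = p); lia.
Qed.

Lemma nU_T2 j : 0 < j -> inT2 j -> nU j + 1 = m j.
Proof.
move=> j_gt0 [p [p_gt0 jE]]; rewrite jE in j_gt0 *; rewrite nUE // /m a_b_sub1 //.
have := a_ge p; have := bE p => bpE ap_ge.
by rewrite (_ : 2 * (b p - 1) - (a p + b p - 2) = p); lia.
Qed.

Lemma nU_T3 j : 0 < j -> inT3 j -> nU j = m j.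
Proof.
move=> j_gt0 [p [p_gt0 jE]]; rewrite jE in j_gt0 *.
have abE : 2 * a p + p = a (b p) by rewrite a_b bE; lia.
have bp_gt0 : 0 < b p by rewrite bE; lia.
rewrite nUE // /m abE a_a ?a_b; last by have := a_ge (b p); lia.
rewrite (_ : 2 * (a p + b p) - (a p + b p + b p - 1) = a p + 1); last by lia.
by rewrite a_a_add1 bE; lia.
Qed.

Lemma inS0 x : ~ inS 0 x.
Proof. by case/inS_iff => -[]. Qed.

Lemma inA_gt0 j : inA j -> 0 < j.
Proof. by case=> n [n_gt0 ->]; have := a_ge n; lia. Qed.

Lemma inB_gt0 j : inB j -> 0 < j.
Proof. by case=> n [n_gt0 ->]; rewrite bE; lia. Qed.

Lemma wythoff_A j : inA j -> wythoff j = a j + 1.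
Proof. by rewrite /wythoff => /inAP ->. Qed.

Lemma wythoff_B j : inB j -> wythoff j = a j - j.
Proof. by case=> p [p_gt0 ->]; rewrite /wythoff; case: inAP => // /(notA_b p_gt0). Qed.

Lemma inS_A j x : inA j -> inS j x <-> x <= a j.
Proof.
move=> jA; have j_gt0 := inA_gt0 jA; rewrite inS_UW; split.
- by case=> [/inUw_le //|/(inWw_iff x j_gt0) /andP []].
- by move=> le_x; apply: lt_wythoff_UW; rewrite wythoff_A //; lia.
Qed.

Lemma inS_B j x : inB j -> inS j x <-> x <= a j /\ x <> floor_phi1 j.
Proof.
move=> jB; have j_gt0 := inB_gt0 jB; have wE := wythoff_B jB.
rewrite floor_phi1E inS_UW; split.
- move=> xUW; split; first by case: xUW => [/inUw_le //|/(inWw_iff x j_gt0) /andP []].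
  by move=> xE; apply: (@wythoff_notin_UW j); rewrite wE -xE.
- case=> le_x ne_x; case: (ltngtP x (a j - j)) => [lt_x|gt_x|//].
  + by apply: lt_wythoff_UW; rewrite wE.
  + by right; apply/(inWw_iff x j_gt0); lia.
Qed.

Theorem lemma5p5 (j : nat) :
  (* (i) *)
  (1 <= j -> forall x, inW j x <-> m j <= x <= a j) /\
  (* (ii) U_j = {0..n(j)} ∪ {z_{j,1} < ... < z_{j,j-n(j)-1}}, z_{j,i} = b(k_j+i-1) *)
  (1 <= j ->
     size (zseq j) = j - nU j - 1 /\
     forall k, 1 <= k -> nU j < b k ->
       (forall k', 1 <= k' -> k' < k -> b k' <= nU j) ->
       forall i, 1 <= i <= j - nU j - 1 -> z j i = b (k + i - 1)) /\
  (* (iii) *)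
  (1 <= j -> inT1 j -> nU j + 2 = m j) /\
  (* (iv) *)
  (1 <= j -> inT2 j -> nU j + 1 = m j) /\
  (* (v) *)
  (1 <= j -> inT3 j -> nU j = m j) /\
  (* (vi) *)
  (j = 0 -> forall x, ~ inS j x) /\
  (inA j -> forall x, inS j x <-> x <= a j) /\
  (inB j -> forall x, inS j x <-> x <= a j /\ x <> floor_phi1 j) /\
  (* (vii) *)
  (j = 0 -> q 2 j = 0) /\
  (inA j -> q 2 j = a j + 1) /\
  (inB j -> q 2 j = floor_phi1 j).
Proof.
split; first by move=> j_gt0 x; apply: inW_iff.
split.
  move=> j_gt0; split=> [|k k_gt0 lt_bk min_k i le_i]; first exact: size_zseq.
  by rewrite zE // (least_b_gt_nU j_gt0 k_gt0 lt_bk min_k) addnAC addnK.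
split; first exact: nU_T1.
split; first exact: nU_T2.
split; first exact: nU_T3.
split; first by move=> -> x; apply: inS0.
split; first by move=> jA x; apply: inS_A.
split; first by move=> jB x; apply: inS_B.
split; first by move=> ->; rewrite q2E wythoff0.
split; first by move=> jA; rewrite q2E wythoff_A.
by move=> jB; rewrite q2E wythoff_B // floor_phi1E.
Qed.
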